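(* Let $n$ be an even integer, let $s$ be a positive integer with $s < n/2$, put $k = s$, and let $x$ be an integer with $2s \leq x \leq n-s-1$. Let $d$ be the sequence of length $n$ $$d = (\underbrace{n-1, \ldots, n-1}_{s},\, \underbrace{x, \ldots, x}_{n-2s},\, \underbrace{s, \ldots, s}_{s}).$$ Then $d$ is a $k$-factorable graphic sequence, and no realization of $d$ has a connected $k$-factor.
   Context: A finite sequence of nonnegative integers $d = (d_1, \ldots, d_n)$ is graphic if there is a simple graph on vertices $v_1, \ldots, v_n$ with $\deg(v_i) = d_i$ for all $i$; such a graph is a realization of $d$. A $k$-factor of a graph $G$ is a spanning subgraph of $G$ in which every vertex has degree $k$. A graphic sequence $d$ is $k$-factorable if some realization of $d$ contains a $k$-factor. A connected $k$-factor is a $k$-factor that is a connected graph. *)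

From mathcomp Require Import all_boot all_order.
Set Implicit Arguments. Unset Strict Implicit. Unset Printing Implicit Defensive.

Definition simple_graph (T : finType) (e : rel T) : Prop :=
  symmetric e /\ irreflexive e.

Definition deg (T : finType) (e : rel T) (v : T) : nat := #|[set w | e v w]|.

Definition realization (d : seq nat) (e : rel 'I_(size d)) : Prop :=
  simple_graph e /\ forall i : 'I_(size d), deg e i = nth 0 d i.

Arguments realization : clear implicits.

Definition graphic (d : seq nat) : Prop := exists e : rel 'I_(size d), realization d e.

Definition k_factor (T : finType) (k : nat) (G F : rel T) : Prop :=
  @simple_graph T F /\ subrel F G /\ forall v, deg F v = k.

Definition connected_graph (T : finType) (F : rel T) : Prop :=
  forall u v : T, connect F u v.

Definition k_factorable (k : nat) (d : seq nat) : Prop :=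
  exists e : rel 'I_(size d), realization d e /\ exists F, k_factor k e F.

Definition seq_d (n s x : nat) : seq nat :=
  nseq s n.-1 ++ nseq (n - 2 * s) x ++ nseq s s.

From mathcomp Require Import all_boot all_order.
From mathcomp Require Import zify.

(* The s vertices of degree n - 1 are joined to everything and the s vertices
   of degree s only to them; the n - 2s middle vertices also carry an
   (x - s)-regular graph, taken from the round-robin 1-factorization of the
   complete graph on n - 2s (an even number of) vertices.  Keeping only the
   complete bipartite graph between the two outer blocks and s of the colour
   classes in the middle gives an s-factor, since s <= x - s < n - 2s.
   Conversely, in any realization the vertices of degree s are adjacent exactly
   to the vertices of degree n - 1, so in an s-factor the two outer blocks span
   a K_{s,s} component and the middle vertices cannot be reached. *)

Lemma card_ord_count N (P : pred nat) : #|[set w : 'I_N | P w]| = count P (iota 0 N).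
Proof.
rewrite cardsE cardE -(val_enum_ord N) count_map /enum_mem size_filter.
by rewrite (@eq_filter _ _ predT) // filter_predT.
Qed.

Lemma count_iota_lt r N : r <= N -> count (fun j => j < r) (iota 0 N) = r.
Proof. by move=> le_rN; rewrite -size_filter (filter_iota_ltn 0 le_rN) size_iota. Qed.

Lemma count_iota_ge r N : r <= N -> count (fun j => N - r <= j) (iota 0 N) = r.
Proof.
move=> le_rN; have := count_predC (fun j => j < N - r) (iota 0 N).
rewrite count_iota_lt ?leq_subr // size_iota (eq_count (a2 := fun j => N - r <= j)).
  by lia.
by move=> j /=; rewrite -leqNgt.
Qed.

Lemma count_iota_neq u N : u < N -> count (fun j => u != j) (iota 0 N) = N.-1.
Proof.
move=> lt_uN; have := count_predC (pred1 u) (iota 0 N).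
rewrite count_uniq_mem ?iota_uniq // mem_iota lt_uN size_iota add1n.
have -> : count (predC (pred1 u)) (iota 0 N) = count (fun j => u != j) (iota 0 N).
  by apply: eq_count => j /=; rewrite eq_sym.
by lia.
Qed.

Lemma count_predU_disjoint (T : Type) (a1 a2 : pred T) s :
  (forall x, a1 x -> ~~ a2 x) ->
  count (fun x => a1 x || a2 x) s = count a1 s + count a2 s.
Proof.
move=> disj; rewrite -count_predUI -[LHS]addn0; congr (_ + _).
rewrite -(count_pred0 s); apply: eq_count => x /=.
by case a1x: (a1 x); rewrite // (negbTE (disj x a1x)).
Qed.

Lemma uniq_perm_iota (s : seq nat) N :
  uniq s -> size s = N -> all (fun j => j < N) s -> perm_eq s (iota 0 N).
Proof.
move=> uniq_s size_s /allP lt_sN.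
have sub_s : {subset s <= iota 0 N} by move=> j /lt_sN; rewrite mem_iota.
have le_size : size (iota 0 N) <= size s by rewrite size_iota size_s.
exact: uniq_perm uniq_s (iota_uniq 0 N) (uniq_min_size uniq_s sub_s le_size).2.
Qed.

Lemma half_mod_inj q h j k :
  h.*2 = q.+1 -> j < q -> k < q -> j * h = k * h %[mod q] -> j = k.
Proof.
move=> def_h lt_jq lt_kq eq_jk.
have : j * h * 2 = k * h * 2 %[mod q] by rewrite -modnMml eq_jk modnMml.
rewrite -!mulnA muln2 def_h !mulnS !(addnC _ (_ * q)) !modnMDl.
by rewrite !modn_small.
Qed.

(* In the round-robin 1-factorization of K_m (m even), the edge ij with
   i, j < m - 1 gets colour (i + j) / 2 mod m - 1 (m / 2 inverts 2 modulo
   m - 1), and the last vertex is matched to i in colour i.  The edges of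
   colour < r then form an r-regular graph. *)
Definition rr_colour (m i j : nat) : nat :=
  if i == m.-1 then j else if j == m.-1 then i else (i + j) * m./2 %% m.-1.

Definition round_robin (m r : nat) : rel nat :=
  fun i j => (i != j) && (rr_colour m i j < r).

Lemma rr_colourC m i j : rr_colour m i j = rr_colour m j i.
Proof.
rewrite /rr_colour addnC.
by case: (eqVneq i m.-1) => [->|]; case: eqVneq.
Qed.

Lemma round_robin_sym m r : symmetric (round_robin m r).
Proof. by move=> i j; rewrite /round_robin eq_sym rr_colourC. Qed.

Lemma round_robin_irr m r : irreflexive (round_robin m r).
Proof. by move=> i; rewrite /round_robin eqxx. Qed.

Lemma round_robin_mono m r1 r2 :
  r1 <= r2 -> subrel (round_robin m r1) (round_robin m r2).
Proof.
rewrite /round_robin => le_r12 i j /andP[-> lt_r1].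
exact: leq_trans lt_r1 le_r12.
Qed.

Section RoundRobinDegree.

Variables m i : nat.
Hypotheses (m_even : ~~ odd m) (lt_im : i < m).

Lemma rr_colour_lt j : j < m -> j != i -> rr_colour m i j < m.-1.
Proof.
move=> lt_jm ne_ji; rewrite /rr_colour.
case: eqP => [|ne_i]; first lia.
case: eqP => [|ne_j]; first lia.
by rewrite ltn_mod; lia.
Qed.

Lemma rr_colour_inj :
  {in [pred j | (j < m) && (j != i)] &, injective (rr_colour m i)}.
Proof.
move=> j k /andP[lt_jm ne_ji] /andP[lt_km ne_ki]; rewrite /rr_colour.
have [// | ne_iq] := eqVneq i m.-1.
have def_h : m./2.*2 = m.-1.+1 by rewrite even_halfK //; lia.
pose f l := (i + l) * m./2 %% m.-1.
have f_inj l1 l2 : l1 < m.-1 -> l2 < m.-1 -> f l1 = f l2 -> l1 = l2.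
  move=> lt_l1 lt_l2 /eqP; rewrite /f !mulnDl eqn_modDl => /eqP.
  exact: half_mod_inj.
have fii : f i = i.
  rewrite /f; have -> : (i + i) * m./2 = i * m.-1 + i by move: def_h; rewrite -muln2; nia.
  by rewrite modnMDl modn_small //; lia.
have lt_iq : i < m.-1 by lia.
have [-> | ne_jq] := eqVneq j m.-1; have [-> | ne_kq] := eqVneq k m.-1 => //.
- by rewrite -[X in X = _]fii => /f_inj; lia.
- by rewrite -[X in _ = X]fii => /f_inj; lia.
- by apply: f_inj; lia.
Qed.

Lemma perm_rr_colours :
  perm_eq [seq rr_colour m i j | j <- iota 0 m & j != i] (iota 0 m.-1).
Proof.
apply: uniq_perm_iota.
- rewrite map_inj_in_uniq ?filter_uniq ?iota_uniq //.
  move=> j k; rewrite !mem_filter !mem_iota => /andP[ne_ji lt_jm] /andP[ne_ki lt_km].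
  by apply: rr_colour_inj; rewrite inE /= ?ne_ji ?ne_ki andbT; lia.
- rewrite size_map size_filter -(count_iota_neq i m lt_im).
  by apply: eq_count => j; rewrite eq_sym.
- apply/allP => c /mapP[j]; rewrite mem_filter mem_iota => /andP[ne_ji lt_jm] ->.
  exact: rr_colour_lt.
Qed.

Lemma count_round_robin r : r <= m.-1 -> count (round_robin m r i) (iota 0 m) = r.
Proof.
move=> le_r; rewrite -[RHS](count_iota_lt r m.-1 le_r) -(permP perm_rr_colours).
by rewrite count_map count_filter; apply: eq_count => j; rewrite /= andbC eq_sym.
Qed.

End RoundRobinDegree.

Definition shift_rel (s m : nat) (e : rel nat) : rel nat :=
  fun u v => [&& s <= u < s + m, s <= v < s + m & e (u - s) (v - s)].

Lemma shift_rel_sym s m e : symmetric e -> symmetric (shift_rel s m e).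
Proof. by move=> e_sym u v; rewrite /shift_rel andbCA e_sym. Qed.

Lemma shift_rel_irr s m e : irreflexive e -> irreflexive (shift_rel s m e).
Proof. by move=> e_irr u; rewrite /shift_rel e_irr !andbF. Qed.

Lemma count_shift_rel n s m e u : s + m <= n ->
  count (shift_rel s m e u) (iota 0 n) =
  if s <= u < s + m then count (e (u - s)) (iota 0 m) else 0.
Proof.
move=> le_n; case: ifP => [u_in | u_out]; last first.
  by rewrite -[RHS](count_pred0 (iota 0 n)); apply: eq_count => v; rewrite /shift_rel u_out.
rewrite -(subnKC le_n) -addnA !iotaD add0n !count_cat.
rewrite -[s in iota s m]addn0 iotaDl count_map.
rewrite (@eq_in_count _ _ pred0 (iota 0 s)) => [|v]; last first.
  by rewrite mem_iota /shift_rel => /andP[_ lt_vs]; rewrite (leqNgt s v) lt_vs /= andbF.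
rewrite (@eq_in_count _ _ pred0 (iota (s + m) _)) => [|v]; last first.
  by rewrite mem_iota /shift_rel => /andP[le_v _]; rewrite (ltnNge v) le_v /= !andbF.
rewrite !count_pred0 add0n addn0; apply: eq_in_count => j.
by rewrite mem_iota /shift_rel /= u_in leq_addr ltn_add2l addKn => ->.
Qed.

Section BlockGraphs.

Variables n s : nat.

Definition hub_edge : rel nat := fun u v => (u != v) && ((u < s) || (v < s)).

Definition cross_edge : rel nat :=
  fun u v => (u < s) && (n - s <= v) || (v < s) && (n - s <= u).

Definition middle_graph r : rel nat :=
  shift_rel s (n - 2 * s) (round_robin (n - 2 * s) r).

Definition realization_graph r : rel nat :=
  fun u v => hub_edge u v || middle_graph r u v.

Definition factor_graph : rel nat := fun u v => cross_edge u v || middle_graph s u v.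

Hypothesis lt_2s_n : 2 * s < n.

Lemma middle_graph_sym r : symmetric (middle_graph r).
Proof. exact/shift_rel_sym/round_robin_sym. Qed.

Lemma middle_graph_irr r : irreflexive (middle_graph r).
Proof. exact/shift_rel_irr/round_robin_irr. Qed.

Lemma realization_graph_sym r : symmetric (realization_graph r).
Proof.
by move=> u v; rewrite /realization_graph /hub_edge eq_sym (orbC (u < s)) middle_graph_sym.
Qed.

Lemma realization_graph_irr r : irreflexive (realization_graph r).
Proof. by move=> u; rewrite /realization_graph /hub_edge eqxx middle_graph_irr. Qed.

Lemma factor_graph_sym : symmetric factor_graph.
Proof.
move=> u v; rewrite /factor_graph /cross_edge middle_graph_sym.
by congr (_ || _); apply: orbC.
Qed.

Lemma factor_graph_irr : irreflexive factor_graph.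
Proof.
move=> u; rewrite /factor_graph /cross_edge middle_graph_irr orbF orbb.
by apply/negP => /andP[]; lia.
Qed.

Lemma factor_graph_sub r : s <= r -> subrel factor_graph (realization_graph r).
Proof.
move=> le_sr u v /orP[cross_uv | mid_uv]; apply/orP; [left | right].
  by move: cross_uv; rewrite /cross_edge /hub_edge; lia.
move: mid_uv; rewrite /middle_graph /shift_rel.
by case/and3P=> -> -> /(round_robin_mono _ _ _ le_sr).
Qed.

Lemma count_hub_edge u : u < n ->
  count (hub_edge u) (iota 0 n) = if u < s then n.-1 else s.
Proof.
move=> lt_un; case: ifP => lt_us.
  by rewrite -(count_iota_neq u n lt_un); apply: eq_count => v; rewrite /hub_edge lt_us andbT.
rewrite -[RHS](count_iota_lt s n _); last by lia.
apply: eq_count => v; rewrite /hub_edge lt_us /=.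
by case: (ltnP v s) => lt_vs; rewrite ?andbF ?andbT //; apply/eqP; lia.
Qed.

Lemma count_cross_edge u :
  count (cross_edge u) (iota 0 n) = if (u < s) || (n - s <= u) then s else 0.
Proof.
rewrite /cross_edge; case: (ltnP u s) => [lt_us | _] /=.
  rewrite -[RHS](count_iota_ge s n _); last by lia.
  have -> : (n - s <= u) = false by lia.
  by apply: eq_count => v; rewrite andbF orbF.
case: (leqP (n - s) u) => _.
  rewrite -[RHS](count_iota_lt s n _); last by lia.
  by apply: eq_count => v; rewrite andbT.
by rewrite -[RHS](count_pred0 (iota 0 n)); apply: eq_count => v; rewrite andbF.
Qed.

Hypothesis n_even : ~~ odd n.

Lemma count_middle_graph r u : r < n - 2 * s ->
  count (middle_graph r u) (iota 0 n) = if s <= u < n - s then r else 0.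
Proof.
move=> lt_r; rewrite count_shift_rel; last by lia.
have -> : s + (n - 2 * s) = n - s by lia.
case: ifP => // u_mid; apply: count_round_robin; last by lia.
  by rewrite oddB ?odd_mul ?(negbTE n_even) //; lia.
by lia.
Qed.

Lemma count_realization_graph r u : r < n - 2 * s -> u < n ->
  count (realization_graph r u) (iota 0 n) =
  if u < s then n.-1 else if u < n - s then s + r else s.
Proof.
move=> lt_r lt_un; rewrite count_predU_disjoint.
  rewrite count_hub_edge // count_middle_graph //.
  by case: (ltnP u s) => _; case: (ltnP u (n - s)) => _ /=; lia.
rewrite /hub_edge /middle_graph /shift_rel => v /andP[_ hub_uv].
by apply/negP => /and3P[/andP[le_su _] /andP[le_sv _] _]; move: hub_uv; lia.
Qed.

Lemma count_factor_graph u : s < n - 2 * s -> u < n ->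
  count (factor_graph u) (iota 0 n) = s.
Proof.
move=> lt_s lt_un; rewrite count_predU_disjoint.
  rewrite count_cross_edge count_middle_graph //.
  by case: (ltnP u s) => _; case: (leqP (n - s) u) => _ /=; lia.
rewrite /cross_edge /middle_graph /shift_rel => v cross_uv.
by apply/negP => /and3P[/andP[le_su lt_u] /andP[le_sv lt_v] _]; move: cross_uv; lia.
Qed.

End BlockGraphs.

Definition ord_rel N (e : rel nat) : rel 'I_N := fun u v => e u v.

Lemma deg_ord_rel N e (u : 'I_N) : deg (ord_rel N e) u = count (e u) (iota 0 N).
Proof. exact: card_ord_count. Qed.

Lemma simple_graph_ord_rel N e :
  symmetric e -> irreflexive e -> simple_graph (ord_rel N e).
Proof. by move=> e_sym e_irr; split=> [u v | u]; [apply: e_sym | apply: e_irr]. Qed.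

Lemma full_degree_adj (T : finType) (G : rel T) a w :
  simple_graph G -> deg G a = #|T|.-1 -> w != a -> G a w.
Proof.
move=> [_ G_irr] deg_a ne_wa.
have sub_a : [set v | G a v] \subset [set~ a].
  by apply/subsetP => v; rewrite !inE; apply: contraTN => /eqP ->; rewrite G_irr.
have /eqP/setP/(_ w) : [set v | G a v] == [set~ a].
  by rewrite eqEcard sub_a cardsC1 -[#|_|]/(deg G a) deg_a /=.
by rewrite !inE ne_wa.
Qed.

Section NoConnectedFactor.

Variables (T : finType) (G F : rel T) (A C : {set T}).
Hypotheses (G_simple : simple_graph G) (AC_disjoint : [disjoint A & C]).
Hypothesis A_full : forall a, a \in A -> deg G a = #|T|.-1.
Hypothesis C_deg : forall c, c \in C -> deg G c = #|A|.
Hypothesis card_C : #|C| = #|A|.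
Hypothesis F_factor : k_factor #|A| G F.

Lemma neighbours_C c : c \in C -> [set w | G c w] = A.
Proof.
move=> Cc; have [G_sym _] := G_simple; apply/esym/eqP.
rewrite eqEcard -[#|[set w | G c w]|]/(deg G c) C_deg // leqnn andbT.
apply/subsetP => a Aa; rewrite inE G_sym; apply: full_degree_adj => //; first exact: A_full.
by apply: contraTneq Cc => ->; rewrite (disjointFr AC_disjoint).
Qed.

Lemma factor_neighbours_C c : c \in C -> [set w | F c w] = A.
Proof.
move=> Cc; have [_ [FG F_deg]] := F_factor; apply/eqP.
rewrite eqEcard -[#|[set w | F c w]|]/(deg F c) F_deg leqnn andbT -(neighbours_C _ Cc).
by apply/subsetP => w; rewrite !inE => /FG.
Qed.

Lemma factor_neighbours_A a : a \in A -> [set w | F a w] = C.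
Proof.
move=> Aa; have [[F_sym _] [_ F_deg]] := F_factor; apply/esym/eqP.
rewrite eqEcard -[#|[set w | F a w]|]/(deg F a) F_deg card_C leqnn andbT.
apply/subsetP => c Cc; rewrite inE F_sym.
by have /setP/(_ a) := factor_neighbours_C _ Cc; rewrite inE Aa.
Qed.

Lemma factor_closed : closed F (A :|: C).
Proof.
have [[F_sym _] _] := F_factor.
apply: intro_closed; first exact: sym_connect_sym.
move=> u w Fuw; rewrite !inE => /orP[Au | Cu].
  by have /setP/(_ w) := factor_neighbours_A _ Au; rewrite inE Fuw => <-; rewrite orbT.
by have /setP/(_ w) := factor_neighbours_C _ Cu; rewrite inE Fuw => <-.
Qed.

Lemma factor_disconnected u v :
  u \in A :|: C -> v \notin A :|: C -> ~ connected_graph F.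
Proof.
move=> u_in v_out F_conn.
by have := closed_connect factor_closed (F_conn u v); rewrite u_in (negbTE v_out).
Qed.

End NoConnectedFactor.

Section DegreeSequence.

Variables n s x : nat.
Hypothesis lt_2s_n : 2 * s < n.

Local Notation d := (seq_d n s x).

Lemma size_seq_d : size d = n.
Proof. by rewrite /seq_d !size_cat !size_nseq; lia. Qed.

Lemma iota_size_seq_d : iota 0 (size d) = iota 0 n.
Proof. by rewrite size_seq_d. Qed.

Lemma nth_seq_d i : i < n ->
  nth 0 d i = if i < s then n.-1 else if i < n - s then x else s.
Proof.
move=> lt_in; rewrite /seq_d !nth_cat !size_nseq !nth_nseq.
by do ![case: ifP => ?]; lia.
Qed.

Lemma ltn_ord_seq_d (u : 'I_(size d)) : u < n.
Proof. by apply: leq_trans (ltn_ord u) _; rewrite size_seq_d. Qed.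

Lemma no_connected_factor_seq_d e F :
  0 < s -> realization d e -> k_factor s e F -> ~ connected_graph F.
Proof.
move=> s_gt0 [e_simple deg_e] F_factor.
pose A := [set u : 'I_(size d) | u < s]; pose C := [set u : 'I_(size d) | n - s <= u].
have card_A : #|A| = s.
  by rewrite (card_ord_count _ (fun j => j < s)) iota_size_seq_d count_iota_lt //; lia.
have card_C : #|C| = s.
  by rewrite (card_ord_count _ (fun j => n - s <= j)) iota_size_seq_d count_iota_ge //; lia.
have lt_0d : 0 < size d by rewrite size_seq_d; lia.
have lt_sd : s < size d by rewrite size_seq_d; lia.
apply: (@factor_disconnected _ e F A C e_simple _ _ _ _ _ (Ordinal lt_0d) (Ordinal lt_sd)).
- by rewrite -setI_eq0; apply/eqP/setP => w; rewrite !inE; lia.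
- move=> a; rewrite inE deg_e nth_seq_d ?ltn_ord_seq_d // => ->.
  by rewrite card_ord size_seq_d.
- by move=> c; rewrite inE deg_e card_A nth_seq_d ?ltn_ord_seq_d //; do ![case: ifP => ?]; lia.
- by rewrite card_A card_C.
- by rewrite card_A.
- by rewrite !inE /= s_gt0.
- by rewrite !inE /=; lia.
Qed.

Hypotheses (n_even : ~~ odd n) (le_2s_x : 2 * s <= x) (lt_x : x < n - s).

Definition seq_d_graph : rel 'I_(size d) := ord_rel (size d) (realization_graph n s (x - s)).

Lemma realization_seq_d : realization d seq_d_graph.
Proof.
split; first exact/simple_graph_ord_rel/realization_graph_irr/realization_graph_sym.
move=> u; rewrite deg_ord_rel iota_size_seq_d count_realization_graph ?ltn_ord_seq_d //.
  by rewrite nth_seq_d ?ltn_ord_seq_d ?subnKC //; lia.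
by lia.
Qed.

Lemma factor_seq_d_graph : k_factor s seq_d_graph (ord_rel (size d) (factor_graph n s)).
Proof.
split; first exact: simple_graph_ord_rel (factor_graph_sym n s) (factor_graph_irr n s lt_2s_n).
split; first by move=> u v; apply: factor_graph_sub; lia.
move=> u; rewrite deg_ord_rel iota_size_seq_d count_factor_graph ?ltn_ord_seq_d //; lia.
Qed.

End DegreeSequence.

Theorem claim2 (n s x : nat) :
  ~~ odd n -> 0 < s -> 2 * s < n -> 2 * s <= x -> x <= n - s - 1 ->
  let d := seq_d n s x in
  let k := s in
  graphic d /\ k_factorable k d /\
  (forall e, realization d e ->
     ~ (exists F, k_factor k e F /\ connected_graph F)).
Proof.
move=> n_even s_gt0 lt_2s_n le_2s_x le_x d k.
have lt_x : x < n - s by lia.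
have real_d := realization_seq_d n s x lt_2s_n n_even le_2s_x lt_x.
have factor_d := factor_seq_d_graph n s x lt_2s_n n_even le_2s_x lt_x.
split; first by exists (seq_d_graph n s x).
split; first by exists (seq_d_graph n s x); split; last exact: ex_intro _ _ factor_d.
by move=> e real_e [F [F_factor]]; apply: no_connected_factor_seq_d F_factor.
Qed.
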